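(* Let $\tau$ be a nonnegative bipartite quantum correlation measure satisfying the monogamy relation $\tau(\rho_{X_1|X_2\cdots X_N})\geq \tau(\rho_{X_1X_2})+\cdots+\tau(\rho_{X_1X_N})$ for every multipartite state $\rho_{X_1\cdots X_N}$ (with subsystems possibly formed by grouping several parties). Let $\rho_{A_1A_2\cdots A_n}$ be an $n$-partite state, and let $k\geq 1$, $\frac12\leq p\leq 1$, $r\geq 2$, $0\leq\alpha\leq \frac r2$; put $l=\frac{(1+k)^{\alpha/r}-p^{\alpha/r}}{k^{\alpha/r}}$. Write $\tau_{A_1A_i}=\tau(\rho_{A_1A_i})$ and $\tau_{A_1|A_{j+1}\cdots A_n}=\tau(\rho_{A_1|A_{j+1}\cdots A_n})$ (so $\tau_{A_1|A_n}=\tau_{A_1A_n}$). (1) Let $n\geq 4$ and $2\leq m\leq n-2$. If $k\tau^r_{A_1A_i}\leq \tau^r_{A_1|A_{i+1}\cdots A_n}$ for $i=2,\dots,m$ and $\tau^r_{A_1A_j}\geq k\tau^r_{A_1|A_{j+1}\cdots A_n}$ for $j=m+1,\dots,n-1$, then $$\tau^\alpha_{A_1|A_2\cdots A_n}\geq p^{\alpha/r}\big(\tau^\alpha_{A_1A_2}+l\tau^\alpha_{A_1A_3}+\cdots+l^{m-2}\tau^\alpha_{A_1A_m}\big)+l^m\big[\tau^\alpha_{A_1A_{m+1}}+p^{\alpha/r}\tau^\alpha_{A_1A_{m+2}}+\cdots+p^{(n-m-2)\alpha/r}\tau^\alpha_{A_1A_{n-1}}\big]+l^{m-1}p^{(n-m-1)\alpha/r}\tau^\alpha_{A_1A_n}.$$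 (2) Let $n\geq 3$. If $k\tau^r_{A_1A_i}\leq \tau^r_{A_1|A_{i+1}\cdots A_n}$ for $i=2,\dots,n-1$, then $$\tau^\alpha_{A_1|A_2\cdots A_n}\geq p^{\alpha/r}\big(\tau^\alpha_{A_1A_2}+l\tau^\alpha_{A_1A_3}+\cdots+l^{n-3}\tau^\alpha_{A_1A_{n-1}}\big)+l^{n-2}\tau^\alpha_{A_1A_n}.$$ (3) Let $n\geq 3$. If $\tau^r_{A_1A_j}\geq k\tau^r_{A_1|A_{j+1}\cdots A_n}$ for $j=2,\dots,n-1$, then $$\tau^\alpha_{A_1|A_2\cdots A_n}\geq l\big(\tau^\alpha_{A_1A_2}+p^{\alpha/r}\tau^\alpha_{A_1A_3}+\cdots+p^{(n-3)\alpha/r}\tau^\alpha_{A_1A_{n-1}}\big)+p^{(n-2)\alpha/r}\tau^\alpha_{A_1A_n}.$$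
   Context: $\rho_{A_1A_i}$ is the reduced state of $\rho_{A_1\cdots A_n}$ on $A_1A_i$; $\rho_{A_1|A_{j+1}\cdots A_n}$ is the reduced state on $A_1A_{j+1}\cdots A_n$ regarded as a bipartite state for the bipartition $A_1$ versus $A_{j+1}\cdots A_n$; $\rho_{X_1|X_2\cdots X_N}$ similarly denotes the bipartite cut $X_1$ versus $X_2\cdots X_N$. Examples of such $\tau$ mentioned by the paper are the squared concurrence and the squared convex-roof extended negativity. *)

From HB Require Import structures.
From mathcomp Require Import all_boot all_order all_algebra.
From mathcomp Require Import reals.
From mathcomp Require Import exp.
From mathcomp.real_closed Require Import complex.
Set Implicit Arguments. Unset Strict Implicit. Unset Printing Implicit Defensive.
Import Order.TTheory GRing.Theory Num.Theory.
Local Open Scope ring_scope.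

Definition op (R : realType) (T : finType) := T -> T -> R[i].

Definition is_state (R : realType) (T : finType) (rho : op R T) : Prop :=
  (forall v : T -> R[i],
      0 <= \sum_(s : T) \sum_(t : T) ((v s)^* * rho s t * v t)) /\
  \sum_(s : T) rho s s = 1.

(* A multipartite system: parties indexed by a finite type I, party i has
   (finite) basis A i; joint basis = configurations. *)
Definition config (I : finType) (A : I -> finType) := {dffun forall i : I, A i}.

(* Basis of the composite subsystem formed by grouping the parties in S. *)
Definition subsys (I : finType) (A : I -> finType) (S : {set I}) :=
  {dffun forall j : {i : I | i \in S}, A (val j)}.

(* reduced state of rho on party x and the group S, regarded as the bipartite
   state for the cut  x | S  (partial trace over all other parties) *)
Definition reduced (R : realType) (I : finType) (A : I -> finType)
    (rho : op R (config A)) (x : I) (S : {set I}) :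
    op R (A x * subsys A S)%type :=
  fun ab ab' =>
    \sum_(c : config A | (c x == ab.1) &&
                          [forall j : {i : I | i \in S}, c (val j) == ab.2 j])
    \sum_(c' : config A | (c' x == ab'.1) &&
                          [forall j : {i : I | i \in S}, c' (val j) == ab'.2 j] &&
                          [forall i : I, ((i != x) && (i \notin S)) ==> (c i == c' i)])
      rho c c'.
Arguments reduced {R I A} rho x S _ _.

Definition bimeasure (R : realType) :=
  forall (X Y : finType), op R (X * Y)%type -> R.

Definition nonneg_measure (R : realType) (tau : bimeasure R) : Prop :=
  forall (X Y : finType) (rho : op R (X * Y)%type), is_state rho -> 0 <= tau X Y rho.

Definition monogamous (R : realType) (tau : bimeasure R) : Prop :=
  forall (I : finType) (A : I -> finType) (rho : op R (config A)),
    is_state rho ->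
    forall (x : I) (K : nat) (G : 'I_K -> {set I}),
      (forall k, (0 < #|G k|)%N) ->
      (forall k, x \notin G k) ->
      (forall k k', k != k' -> [disjoint G k & G k']) ->
      \sum_(k < K) tau _ _ (reduced rho x (G k))
        <= tau _ _ (reduced rho x (\bigcup_(k < K) G k)).

(* n-partite state with parties A_1,...,A_n indexed by 'I_n (A_i has index i-1) *)
(* group {A_i} (1-based paper index i) *)
Definition party (n : nat) (i : nat) : {set 'I_n} := [set t : 'I_n | val t == i.-1].
(* group A_{j+1} ... A_n *)
Definition tailp (n : nat) (j : nat) : {set 'I_n} := [set t : 'I_n | j <= val t]%N.

Definition tau2 (R : realType) (tau : bimeasure R) (n : nat) (A : 'I_n -> finType)
  (rho : op R (config A)) (a1 : 'I_n) (i : nat) : R :=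
  tau _ _ (reduced rho a1 (party n i)).
Definition tauT (R : realType) (tau : bimeasure R) (n : nat) (A : 'I_n -> finType)
  (rho : op R (config A)) (a1 : 'I_n) (j : nat) : R :=
  tau _ _ (reduced rho a1 (tailp n j)).
Arguments tau2 {R} tau {n A} rho a1 i.
Arguments tauT {R} tau {n A} rho a1 j.

From HB Require Import structures.
From mathcomp Require Import all_boot all_order all_algebra.
From mathcomp Require Import reals exp.
From mathcomp.real_closed Require Import complex.
From mathcomp Require Import boolp classical_sets topology normedtype derive realfun.
From mathcomp Require Import ring lra zify.
Import Order.TTheory GRing.Theory Num.Theory.
Import numFieldNormedType.Exports.
Local Open Scope ring_scope.

(* Put b = alpha / r <= 1/2.  Monogamy on the cut A1 | Aj (A(j+1)...An) gives
   T(j-1) >= t(j) + T(j), where t(j) = tau_{A1Aj} and T(j) = tau_{A1|A(j+1)...An}.  The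
   key inequality is (A + B)^b >= p^b A^b + l B^b whenever k A <= B: with v = A / B <= 1/k
   it says (1 + v)^b - p^b v^b >= l = (1 + 1/k)^b - p^b (1/k)^b, which holds because
   x |-> (1 + x)^b - p^b x^b is nonincreasing on (0, 1] when p >= 1/2 and b <= 1/2.
   Applied to A, B = t(j)^r, T(j)^r (or the other way round when t(j) dominates), together
   with superadditivity of x^r, it bounds T(j-1)^alpha below by p^b t(j)^alpha + l T(j)^alpha
   (resp. l t(j)^alpha + p^b T(j)^alpha); iterating from j = 2 peels off one party at a time.
   Nonnegativity of tau on the reduced states holds because partial traces of states are
   states. *)

Definition lcoef {R : realType} (k p b : R) : R := (powR (1 + k) b - powR p b) / powR k b.

Section PowerGap.
Variable R : realType.
Implicit Types (k p b r v w a c A B : R).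

Lemma powRV k b : 0 < k -> powR k^-1 b = (powR k b)^-1.
Proof.
move=> k_gt0; apply: (@mulfI _ (powR k b)); first by rewrite lt0r_neq0 ?powR_gt0.
have k_ge0 := ltW k_gt0.
by rewrite -powRM ?invr_ge0 // !divff ?lt0r_neq0 ?powR_gt0 ?powR1.
Qed.

Definition gap p b v : R := powR (v + 1) b - powR p b * powR v b.

Definition gap' p b v : R := b * powR (v + 1) (b - 1) - powR p b * (b * powR v (b - 1)).

Lemma is_derive_gap p b v : 0 < v -> is_derive v 1 (gap p b) (gap' p b v).
Proof.
move=> v_gt0.
have dshift : is_derive (shift 1 v) 1 (fun x : R => powR x b) (b * powR (v + 1) (b - 1)).
  by apply: is_derive1_powR; rewrite /= ltr_wpDr // ltW.
have dpow : is_derive v 1 (fun x : R => powR x b) (b * powR v (b - 1)).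
  exact: is_derive1_powR.
have := is_derive1_comp dshift (is_derive_shift v 1 1); rewrite mulr1 => dleft.
exact: is_deriveD dleft (is_deriveN (is_deriveZ (powR p b) dpow)).
Qed.

(* With q := (v + 1) / v >= 2:  q^(b-1) <= 2^(b-1) <= 2^-b = (1/2)^b <= p^b. *)
Lemma gap'_le0 p b v : 1 / 2 <= p -> 0 <= b -> b <= 1 / 2 -> 0 < v -> v <= 1 ->
  gap' p b v <= 0.
Proof.
move=> p_ge12 b_ge0 b_le12 v_gt0 v_le1; rewrite /gap' subr_le0 mulrCA.
apply: ler_wpM2l => //.
have q_ge2 : 2 <= (v + 1) / v by rewrite ler_pdivlMr //; lra.
have q_gt0 : 0 < (v + 1) / v by apply: lt_le_trans q_ge2; lra.
have -> : powR (v + 1) (b - 1) = powR ((v + 1) / v) (b - 1) * powR v (b - 1).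
  by rewrite -powRM ?divfK ?lt0r_neq0 ?(ltW q_gt0) ?(ltW v_gt0).
rewrite ler_pM2r ?powR_gt0 //.
have -> : b - 1 = - (1 - b) by ring.
rewrite powRN; apply: (@le_trans _ _ (powR 2 (- b))).
  rewrite powRN lef_pV2 ?posrE ?powR_gt0 //.
  apply: (@le_trans _ _ (powR 2 (1 - b))); first by apply: ler_powR; lra.
  by apply: ge0_ler_powR; rewrite ?nnegrE //; lra.
have -> : powR 2 (- b) = powR (2^-1) b by rewrite powRN powRV.
by apply: ge0_ler_powR; rewrite ?nnegrE //; lra.
Qed.

Lemma gap_nonincreasing p b v w : 1 / 2 <= p -> 0 <= b -> b <= 1 / 2 ->
  0 < v -> v <= w -> w <= 1 -> gap p b w <= gap p b v.
Proof.
move=> p_ge12 b_ge0 b_le12 v_gt0 vw w_le1.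
have [| |c] := @MVT_segment R (gap p b) (gap' p b) v w vw.
- move=> x; rewrite in_itv /= => /andP[vx _].
  exact: is_derive_gap (lt_trans v_gt0 vx).
- apply: derivable_within_continuous => x; rewrite in_itv /= => /andP[vx _].
  by have [] := is_derive_gap p b x (lt_le_trans v_gt0 vx).
- rewrite in_itv /= => /andP[vc cw] gapE.
  rewrite -subr_le0 gapE; apply: mulr_le0_ge0; last by rewrite subr_ge0.
  by apply: gap'_le0 => //; [exact: lt_le_trans vc | exact: le_trans w_le1].
Qed.

(* (v + 1)^b <= sqrt (v + 1) <= 1 + sqrt (p v) <= 1 + (p v)^b, as p v <= 1. *)
Lemma gap_le1 p b v : 1 / 2 <= p -> p <= 1 -> 0 <= b -> b <= 1 / 2 -> 0 < v -> v <= 1 ->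
  gap p b v <= 1.
Proof.
move=> p_ge12 p_le1 b_ge0 b_le12 v_gt0 v_le1.
have pv_gt0 : 0 < p * v by apply: mulr_gt0 => //; lra.
have pv_le1 : p * v <= 1 by nra.
have le_sqrt : powR (v + 1) b <= powR (v + 1) (2^-1) by apply: ler_powR; lra.
have ge_sqrt : powR (p * v) (2^-1) <= powR (p * v) b.
  by apply: ger_powR; rewrite ?pv_gt0 ?pv_le1 //; lra.
rewrite !powR12_sqrt in le_sqrt ge_sqrt; try lra.
rewrite powRM in ge_sqrt; try lra.
set s := Num.sqrt (v + 1) in le_sqrt; set t := Num.sqrt (p * v) in ge_sqrt.
have s_ge0 : 0 <= s by rewrite sqrtr_ge0.
have t_ge0 : 0 <= t by rewrite sqrtr_ge0.
have s2 : s * s = v + 1 by rewrite -expr2 sqr_sqrtr //; lra.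
have t2 : t * t = p * v by rewrite -expr2 sqr_sqrtr //; lra.
have t_le1 : t <= 1 by rewrite -sqrtr1 ler_sqrt //; lra.
have : s <= 1 + t by nra.
rewrite /gap; lra.
Qed.

Lemma lcoef_gap k p b : 0 < k -> lcoef k p b = gap p b k^-1.
Proof.
move=> k_gt0; rewrite /lcoef /gap.
have -> : 1 + k = k * (k^-1 + 1) by rewrite mulrDr mulfV ?lt0r_neq0 // mulr1 addrC.
have k_ge0 := ltW k_gt0.
rewrite powRM ?powRV ?addr_ge0 ?invr_ge0 //.
by field; rewrite lt0r_neq0 ?powR_gt0.
Qed.

Lemma lcoef_ge0 k p b : 0 <= k -> 0 <= p -> p <= 1 -> 0 <= b -> 0 <= lcoef k p b.
Proof.
move=> k_ge0 p_ge0 p_le1 b_ge0; rewrite divr_ge0 ?powR_ge0 // subr_ge0.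
apply: (@le_trans _ _ (powR 1 b)).
  by apply: ge0_ler_powR; rewrite ?nnegrE.
by apply: ge0_ler_powR; rewrite ?nnegrE //; lra.
Qed.

Lemma lcoef_le1 k p b : 1 <= k -> 1 / 2 <= p -> p <= 1 -> 0 <= b -> b <= 1 / 2 ->
  lcoef k p b <= 1.
Proof.
move=> k_ge1 p_ge12 p_le1 b_ge0 b_le12.
by rewrite lcoef_gap; [apply: gap_le1; rewrite ?invr_gt0 ?invf_le1 |]; lra.
Qed.

Lemma powR_add_ge_lcoef k p b A B : 1 <= k -> 1 / 2 <= p -> p <= 1 -> 0 <= b -> b <= 1 / 2 ->
  0 <= A -> k * A <= B ->
  powR p b * powR A b + lcoef k p b * powR B b <= powR (A + B) b.
Proof.
move=> k_ge1 p_ge12 p_le1 b_ge0 b_le12 A_ge0 kA_le_B.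
have k_gt0 : 0 < k by lra.
have [->|b_neq0] := eqVneq b 0.
  by rewrite /lcoef !powRr0 subrr !(mul0r, mulr1, addr0).
have [->|A_neq0] := eqVneq A 0.
  by rewrite powR0 // mulr0 !add0r ler_piMl ?powR_ge0 ?lcoef_le1.
have A_gt0 : 0 < A by rewrite lt_def A_neq0.
have B_gt0 : 0 < B by apply: lt_le_trans kA_le_B; rewrite mulr_gt0.
have A_eq : A = B * (A / B) by rewrite mulrCA divff ?lt0r_neq0 // mulr1.
have v_gt0 : 0 < A / B by rewrite divr_gt0.
have v_le : A / B <= k^-1.
  by rewrite ler_pdivrMr // -(ler_pM2l k_gt0) mulrA mulfV ?lt0r_neq0 // mul1r.
move: (A / B) v_gt0 v_le A_eq => v v_gt0 v_le ->.
have kV_le1 : k^-1 <= 1 by rewrite invf_le1.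
have := gap_nonincreasing p b v k^-1 p_ge12 b_ge0 b_le12 v_gt0 v_le kV_le1.
rewrite -lcoef_gap // => /(ler_wpM2l (powR_ge0 B b)).
have -> : B * v + B = B * (v + 1) by rewrite mulrDr mulr1.
have v_ge0 := ltW v_gt0; have B_ge0 := ltW B_gt0.
by rewrite !powRM ?addr_ge0 // /gap; lra.
Qed.

Lemma powR_superadditive r a c : 1 <= r -> 0 <= a -> 0 <= c ->
  powR a r + powR c r <= powR (a + c) r.
Proof.
move=> r_ge1 a_ge0 c_ge0.
have [->|a_neq0] := eqVneq a 0; first by rewrite powR0 ?add0r //; lra.
have a_gt0 : 0 < a by rewrite lt_def a_neq0.
have s_gt0 : 0 < a + c by lra.
have frac_le s : 0 <= s -> s <= a + c -> powR s r <= s / (a + c) * powR (a + c) r.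
  move=> s_ge0 s_le; have [->|s_neq0] := eqVneq s 0; first by rewrite powR0 ?mul0r //; lra.
  have -> : s = s / (a + c) * (a + c) by rewrite divfK ?lt0r_neq0.
  rewrite powRM ?divr_ge0 ?(ltW s_gt0) // mulfK ?lt0r_neq0 // ler_wpM2r ?powR_ge0 //.
  apply: ge1r_powR => //; apply/andP; split; first by rewrite divr_gt0 // lt_def s_neq0.
  by rewrite ler_pdivrMr // mul1r.
apply: le_trans (lerD (frac_le a (ltW a_gt0) _) (frac_le c c_ge0 _)) _; try lra.
by rewrite -mulrDl -mulrDl divff ?lt0r_neq0 // mul1r.
Qed.

Lemma powR_natmul p b (j : nat) : 0 <= p ->
  powR p (j%:R * b) = powR p b ^+ j.
Proof. by move=> p_ge0; rewrite mulrC powRrM powR_mulrn ?powR_ge0. Qed.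

(* T^al >= (a + c)^al = ((a + c)^r)^(al/r) >= (a^r + c^r)^(al/r). *)
Lemma powR_ge_lcoef_split k p r al a c (T : R) :
  1 <= k -> 1 / 2 <= p -> p <= 1 -> 1 <= r -> 0 <= al -> al <= r / 2 ->
  0 <= a -> 0 <= c -> a + c <= T -> k * powR a r <= powR c r ->
  powR p (al / r) * powR a al + lcoef k p (al / r) * powR c al <= powR T al.
Proof.
move=> k_ge1 p_ge12 p_le1 r_ge1 al_ge0 al_le a_ge0 c_ge0 acT ka_le_c.
have r_gt0 : 0 < r by lra.
have b_ge0 : 0 <= al / r by rewrite divr_ge0 // ltW.
have b_le12 : al / r <= 1 / 2 by rewrite ler_pdivrMr //; lra.
have powR_r x : powR x al = powR (powR x r) (al / r).
  by rewrite -powRrM mulrCA divff ?lt0r_neq0 // mulr1.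
apply: (@le_trans _ _ (powR (a + c) al)); last first.
  by apply: ge0_ler_powR; rewrite ?nnegrE ?addr_ge0 //; lra.
rewrite !(powR_r a) (powR_r c) (powR_r (a + c)).
have := powR_add_ge_lcoef _ _ _ _ _ k_ge1 p_ge12 p_le1 b_ge0 b_le12 (powR_ge0 a r) ka_le_c.
move/le_trans; apply.
apply: ge0_ler_powR; rewrite ?nnegrE ?addr_ge0 ?powR_ge0 //.
exact: powR_superadditive.
Qed.

End PowerGap.

(* t i stands for tau_{A1Ai} and T j for tau_{A1|A(j+1)...An}. *)
Section MonogamyChain.
Variables (R : realType) (k p r al : R) (n : nat) (t T : nat -> R).
Hypotheses (k_ge1 : 1 <= k) (p_ge12 : 1 / 2 <= p) (p_le1 : p <= 1).
Hypotheses (r_ge1 : 1 <= r) (al_ge0 : 0 <= al) (al_le : al <= r / 2).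
Hypotheses (t_ge0 : forall i, 0 <= t i) (T_ge0 : forall j, 0 <= T j).
Hypothesis T_split : forall j, (1 <= j)%N -> (j <= n - 2)%N -> t j.+1 + T j.+1 <= T j.
Hypothesis T_last : T (n - 1)%N = t n.

Let b := al / r.
Let l := lcoef k p b.

Let p_ge0 : 0 <= p. Proof. by apply: le_trans p_ge12; rewrite divr_ge0. Qed.

Let l_ge0 : 0 <= l.
Proof.
have r_gt0 : 0 < r := lt_le_trans ltr01 r_ge1.
by apply: lcoef_ge0 => //; [apply: le_trans _ k_ge1 | rewrite divr_ge0 // ltW].
Qed.

Lemma chain_pair q : (1 <= q)%N -> (q <= n - 1)%N ->
  (forall i, (2 <= i)%N -> (i <= q)%N -> k * powR (t i) r <= powR (T i) r) ->
  powR p b * (\sum_(2 <= i < q.+1) l ^+ (i - 2) * powR (t i) al) + l ^+ (q - 1) * powR (T q) al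
    <= powR (T 1%N) al.
Proof.
elim: q => [//|q IH] _ q_le dom.
have [->|q_gt0] := posnP q; first by rewrite big_geq // mulr0 add0r mul1r.
apply: le_trans (IH q_gt0 (ltnW q_le) (fun i i2 iq => dom i i2 (leqW iq))).
rewrite big_nat_recr //= mulrDr -addrA lerD2l.
have step : powR p b * powR (t q.+1) al + l * powR (T q.+1) al <= powR (T q) al.
  by apply: powR_ge_lcoef_split => //; [apply: T_split; lia | apply: dom].
have -> : (q.+1 - 2 = q - 1)%N by lia.
have -> : (q.+1 - 1 = (q - 1).+1)%N by lia.
rewrite exprS mulrCA [l * _]mulrC -mulrA -mulrDr.
by apply: ler_wpM2l => //; apply: exprn_ge0.
Qed.

Lemma chain_tail s d : (1 <= s)%N -> (s + d <= n - 1)%N ->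
  (forall j, (s < j)%N -> (j <= s + d)%N -> k * powR (T j) r <= powR (t j) r) ->
  l * (\sum_(s.+1 <= j < (s + d).+1) powR p ((j - s.+1)%:R * b) * powR (t j) al)
    + powR p (d%:R * b) * powR (T (s + d)%N) al <= powR (T s) al.
Proof.
move=> s_ge1; elim: d => [|d IH] sd_le dom.
  by rewrite addn0 big_geq // mulr0 add0r mul0r powRr0 mul1r.
apply: le_trans (IH _ _); [| lia | by move=> j sj jsd; apply: dom; lia].
rewrite addnS big_nat_recr /=; last by rewrite ltnS leq_addr.
rewrite mulrDr -addrA lerD2l.
have step : powR p b * powR (T (s + d).+1) al + l * powR (t (s + d).+1) al
    <= powR (T (s + d)%N) al.
  by apply: powR_ge_lcoef_split => //; [rewrite addrC; apply: T_split; lia | apply: dom; lia].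
have -> : ((s + d).+1 - s.+1 = d)%N by lia.
rewrite !powR_natmul // addrC exprS [powR p b * _]mulrC [l * _]mulrCA -mulrA -mulrDr.
by apply: ler_wpM2l => //; apply: exprn_ge0; apply: powR_ge0.
Qed.

Lemma chain_pair_last : (2 <= n)%N ->
  (forall i, (2 <= i)%N -> (i <= n - 1)%N -> k * powR (t i) r <= powR (T i) r) ->
  powR p b * (\sum_(2 <= i < n) l ^+ (i - 2) * powR (t i) al) + l ^+ (n - 2) * powR (t n) al
    <= powR (T 1%N) al.
Proof.
move=> n_ge2 dom; have q_ge1 : (1 <= n - 1)%N by lia.
have := chain_pair (n - 1) q_ge1 (leqnn _) dom.
have -> : (n - 1).+1 = n by lia.
have -> : (n - 1 - 1 = n - 2)%N by lia.
by rewrite T_last.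
Qed.

Lemma chain_tail_last : (2 <= n)%N ->
  (forall j, (2 <= j)%N -> (j <= n - 1)%N -> k * powR (T j) r <= powR (t j) r) ->
  l * (\sum_(2 <= j < n) powR p ((j - 2)%:R * b) * powR (t j) al)
    + powR p ((n - 2)%:R * b) * powR (t n) al <= powR (T 1%N) al.
Proof.
move=> n_ge2 dom; have d_le : (1 + (n - 2) <= n - 1)%N by lia.
have := chain_tail 1 (n - 2) (leqnn 1) d_le (fun j j_gt1 j_le => dom j j_gt1 ltac:(lia)).
have -> : (1 + (n - 2) = n - 1)%N by lia.
have -> : (n - 1).+1 = n by lia.
by rewrite T_last.
Qed.

Lemma chain_mixed m : (2 <= m)%N -> (m <= n - 2)%N ->
  (forall i, (2 <= i)%N -> (i <= m)%N -> k * powR (t i) r <= powR (T i) r) ->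
  (forall j, (m + 1 <= j)%N -> (j <= n - 1)%N -> k * powR (T j) r <= powR (t j) r) ->
  powR p b * (\sum_(2 <= i < m.+1) l ^+ (i - 2) * powR (t i) al)
    + l ^+ m * (\sum_(m.+1 <= j < n) powR p ((j - m.+1)%:R * b) * powR (t j) al)
    + l ^+ (m - 1) * powR p ((n - m - 1)%:R * b) * powR (t n) al <= powR (T 1%N) al.
Proof.
move=> m_ge2 m_le domA domB.
have m_ge1 : (1 <= m)%N by lia.
apply: le_trans (chain_pair m m_ge1 _ domA); last by lia.
rewrite -addrA lerD2l.
have md_le : (m + (n - 1 - m) <= n - 1)%N by lia.
have := chain_tail m (n - 1 - m) m_ge1 md_le (fun j m_lt j_le => domB j ltac:(lia) ltac:(lia)).
have -> : (m + (n - 1 - m) = n - 1)%N by lia.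
have -> : (n - 1).+1 = n by lia.
have -> : (n - 1 - m = n - m - 1)%N by lia.
rewrite T_last => tail_le.
have -> : l ^+ m = l ^+ (m - 1) * l by rewrite -exprSr; congr (_ ^+ _); lia.
rewrite -[l ^+ (m - 1) * l * _]mulrA -[l ^+ (m - 1) * _ * _]mulrA -mulrDr.
by apply: ler_wpM2l => //; apply: exprn_ge0.
Qed.

End MonogamyChain.

Section PartialTrace.
Variables (I : finType) (A : I -> finType) (x : I) (S : {set I}).

Definition kept_part (c : config A) : (A x * subsys A S)%type :=
  (c x, @finfun _ (fun j : {i : I | i \in S} => A (val j)) (fun j => c (val j))).

Definition traced_part (c : config A) :
    {dffun forall j : {i : I | (i != x) && (i \notin S)}, A (val j)} :=
  @finfun _ (fun j : {i : I | (i != x) && (i \notin S)} => A (val j)) (fun j => c (val j)).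

Lemma kept_partE (c : config A) (ab : A x * subsys A S) :
  (c x == ab.1) && [forall j : {i : I | i \in S}, c (val j) == ab.2 j] = (ab == kept_part c).
Proof.
case: ab => a s; rewrite /kept_part xpair_eqE eq_sym; congr (_ && _).
apply/forallP/eqP => [same | ->]; last by move=> j; rewrite ffunE.
by apply/ffunP => j; rewrite ffunE; apply/esym/eqP.
Qed.

Lemma traced_partE (c c' : config A) :
  [forall i : I, ((i != x) && (i \notin S)) ==> (c i == c' i)] =
  (traced_part c == traced_part c').
Proof.
apply/forallP/eqP => [same | /ffunP same i].
  by apply/ffunP => -[i i_traced]; rewrite !ffunE; apply/eqP/(implyP (same i)).
by apply/implyP => i_traced; move: (same (exist _ i i_traced)); rewrite !ffunE => ->.
Qed.

Lemma config_split_inj (c c' : config A) :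
  kept_part c = kept_part c' -> traced_part c = traced_part c' -> c = c'.
Proof.
move=> [cx cS] /ffunP ctr; apply/ffunP => i.
have [->|i_neq_x] := eqVneq i x; first exact: cx.
have [iS|iNS] := boolP (i \in S).
  by move/ffunP: cS => /(_ (exist _ i iS)); rewrite !ffunE.
have i_traced : (i != x) && (i \notin S) by rewrite i_neq_x iNS.
by have := ctr (exist _ i i_traced); rewrite !ffunE.
Qed.

Lemma sum_kept_part (V : nmodType) (F : (A x * subsys A S)%type -> config A -> V) :
  \sum_ab \sum_(c | ab == kept_part c) F ab c = \sum_c F (kept_part c) c.
Proof.
rewrite (exchange_big_dep xpredT) //=; apply: eq_bigr => c _.
exact: big_pred1_eq.
Qed.

Variables (R : realType) (rho : op R (config A)).

Lemma reducedE ab ab' : reduced rho x S ab ab' =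
  \sum_(c | ab == kept_part c)
    \sum_(c' | (ab' == kept_part c') && (traced_part c == traced_part c')) rho c c'.
Proof.
apply: eq_big => [c | c _]; first exact: kept_partE.
by apply: eq_bigl => c'; rewrite kept_partE traced_partE.
Qed.

Lemma reduced_trace : \sum_ab reduced rho x S ab ab = \sum_c rho c c.
Proof.
under eq_bigr do rewrite reducedE.
rewrite (sum_kept_part _ (fun ab c =>
  \sum_(c' | (ab == kept_part c') && (traced_part c == traced_part c')) rho c c')).
apply: eq_bigr => c _; rewrite (big_pred1 c) // => c' /=.
apply/andP/eqP => [[/eqP kc /eqP tc] | ->]; last by rewrite !eqxx.
exact: config_split_inj.
Qed.

(* The vector v (x) |e> of the full space, e a basis state of the traced-out parties. *)
Definition tensor_traced (v : (A x * subsys A S)%type -> R[i]) e (c : config A) : R[i] :=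
  if traced_part c == e then v (kept_part c) else 0.

Lemma reduced_form (v : (A x * subsys A S)%type -> R[i]) :
  \sum_ab \sum_ab' ((v ab)^* * reduced rho x S ab ab' * v ab') =
  \sum_e \sum_c \sum_c' ((tensor_traced v e c)^* * rho c c' * tensor_traced v e c').
Proof.
pose G (c c' : config A) := (v (kept_part c))^* * rho c c' * v (kept_part c').
transitivity (\sum_c \sum_c' if traced_part c == traced_part c' then G c c' else 0).
  transitivity (\sum_ab \sum_(c | ab == kept_part c) \sum_ab' \sum_(c' | ab' == kept_part c')
      if traced_part c == traced_part c' then (v ab)^* * rho c c' * v ab' else 0).
    apply: eq_bigr => ab _; rewrite exchange_big /=; apply: eq_bigr => ab' _.
    rewrite reducedE mulr_sumr mulr_suml; apply: eq_bigr => c _.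
    rewrite big_mkcondr mulr_sumr mulr_suml; apply: eq_bigr => c' _ /=.
    by case: ifP; rewrite ?mulr0 ?mul0r.
  rewrite (sum_kept_part _ (fun ab c => \sum_ab' \sum_(c' | ab' == kept_part c')
      if traced_part c == traced_part c' then (v ab)^* * rho c c' * v ab' else 0)).
  apply: eq_bigr => c _.
  exact: (sum_kept_part _ (fun ab' c' =>
      if traced_part c == traced_part c' then (v (kept_part c))^* * rho c c' * v ab' else 0)).
symmetry; rewrite exchange_big; apply: eq_bigr => c _.
rewrite exchange_big; apply: eq_bigr => c' _.
rewrite (bigD1 (traced_part c)) //= big1 => [|e e_neq]; last first.
  by rewrite /tensor_traced eq_sym (negbTE e_neq) conjC0 !mul0r.
by rewrite /tensor_traced eqxx addr0 eq_sym; case: ifP; rewrite ?mulr0.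
Qed.

Lemma reduced_is_state : is_state rho -> is_state (reduced rho x S).
Proof.
case=> psd tr; split; last by rewrite reduced_trace.
by move=> v; rewrite reduced_form; apply: sumr_ge0 => e _; apply: psd.
Qed.

End PartialTrace.

Lemma monogamous2 (R : realType) (tau : bimeasure R) (I : finType) (A : I -> finType)
    (rho : op R (config A)) (x : I) (G1 G2 : {set I}) :
  monogamous tau -> is_state rho ->
  (0 < #|G1|)%N -> (0 < #|G2|)%N -> x \notin G1 -> x \notin G2 -> [disjoint G1 & G2] ->
  tau _ _ (reduced rho x G1) + tau _ _ (reduced rho x G2) <= tau _ _ (reduced rho x (G1 :|: G2)).
Proof.
move=> tau_mono rho_state G1_gt0 G2_gt0 xG1 xG2 G12.
pose G (k : 'I_2) := if val k == 0%N then G1 else G2.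
have := tau_mono _ _ _ rho_state x 2%N G.
have -> : \bigcup_(k < 2) G k = G1 :|: G2 by rewrite big_ord_recl big_ord1.
rewrite big_ord_recl big_ord1; apply.
- by move=> k; rewrite /G; case: ifP.
- by move=> k; rewrite /G; case: ifP.
- by move=> [[|[|//]] ?] [[|[|//]] ?] //= _; rewrite /G //= disjoint_sym.
Qed.

Lemma tailp_split n j : party n j.+1 :|: tailp n j.+1 = tailp n j.
Proof. by apply/setP => t; rewrite !inE /=; lia. Qed.

Lemma tailp_last n : tailp n (n - 1) = party n n.
Proof. by apply/setP => -[m m_lt]; rewrite !inE /= -subn1; lia. Qed.

Lemma tau_tail_split (R : realType) (tau : bimeasure R) (n : nat) (A : 'I_n -> finType)
    (rho : op R (config A)) (a1 : 'I_n) (j : nat) :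
  monogamous tau -> is_state rho -> val a1 = 0%N -> (1 <= j)%N -> (j <= n - 2)%N ->
  tau2 tau rho a1 j.+1 + tauT tau rho a1 j.+1 <= tauT tau rho a1 j.
Proof.
move=> tau_mono rho_state a1_first j_ge1 j_le.
have j_lt : (j < n)%N by lia.
have last_lt : (n.-1 < n)%N by lia.
rewrite /tau2 /tauT -(tailp_split n j).
apply: monogamous2 => //.
- by apply/card_gt0P; exists (Ordinal j_lt); rewrite inE.
- by apply/card_gt0P; exists (Ordinal last_lt); rewrite inE /=; lia.
- by rewrite inE a1_first; lia.
- by rewrite inE a1_first; lia.
- by rewrite -setI_eq0; apply/eqP/setP => t; rewrite !inE; lia.
Qed.

Theorem corollary1 (R : realType) (tau : bimeasure R)
  (tau_ge0 : nonneg_measure tau) (tau_mono : monogamous tau)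
  (n : nat) (A : 'I_n -> finType) (rho : op R (config A)) (rho_state : is_state rho)
  (a1 : 'I_n) (a1_first : nat_of_ord a1 = 0%N)
  (k p r alpha : R) (hk : 1 <= k) (hp1 : 1 / 2 <= p) (hp2 : p <= 1)
  (hr : 2 <= r) (ha1 : 0 <= alpha) (ha2 : alpha <= r / 2) :
  let l := (powR (1 + k) (alpha / r) - powR p (alpha / r)) / powR k (alpha / r) in
  let t2 := tau2 tau rho a1 in
  let tT := tauT tau rho a1 in
  (* (1) *)
  ((4 <= n)%N -> forall m : nat, (2 <= m)%N -> (m <= n - 2)%N ->
     (forall i : nat, (2 <= i)%N -> (i <= m)%N ->
        k * powR (t2 i) r <= powR (tT i) r) ->
     (forall j : nat, (m + 1 <= j)%N -> (j <= n - 1)%N ->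
        powR (t2 j) r >= k * powR (tT j) r) ->
     powR (tT 1%N) alpha >=
       powR p (alpha / r) *
         (\sum_(2 <= i < m.+1) l ^+ (i - 2) * powR (t2 i) alpha)
       + l ^+ m *
         (\sum_(m.+1 <= j < n) powR p ((j - m.+1)%:R * (alpha / r)) * powR (t2 j) alpha)
       + l ^+ (m - 1) * powR p ((n - m - 1)%:R * (alpha / r)) * powR (t2 n) alpha)
  /\
  (* (2) *)
  ((3 <= n)%N ->
     (forall i : nat, (2 <= i)%N -> (i <= n - 1)%N ->
        k * powR (t2 i) r <= powR (tT i) r) ->
     powR (tT 1%N) alpha >=
       powR p (alpha / r) *
         (\sum_(2 <= i < n) l ^+ (i - 2) * powR (t2 i) alpha)
       + l ^+ (n - 2) * powR (t2 n) alpha)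
  /\
  (* (3) *)
  ((3 <= n)%N ->
     (forall j : nat, (2 <= j)%N -> (j <= n - 1)%N ->
        powR (t2 j) r >= k * powR (tT j) r) ->
     powR (tT 1%N) alpha >=
       l * (\sum_(2 <= j < n) powR p ((j - 2)%:R * (alpha / r)) * powR (t2 j) alpha)
       + powR p ((n - 2)%:R * (alpha / r)) * powR (t2 n) alpha).
Proof.
move=> l t2 tT.
have r_ge1 : 1 <= r by lra.
have t2_ge0 i : 0 <= t2 i by apply: tau_ge0; apply: reduced_is_state.
have tT_ge0 j : 0 <= tT j by apply: tau_ge0; apply: reduced_is_state.
have tT_split j : (1 <= j)%N -> (j <= n - 2)%N -> t2 j.+1 + tT j.+1 <= tT j.
  exact: tau_tail_split.
have tT_last : tT (n - 1)%N = t2 n by rewrite /tT /tauT tailp_last.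
split; [| split].
- by move=> _ m; apply: chain_mixed.
- by move=> n_ge3 dom; apply: chain_pair_last => //; apply: ltnW.
- by move=> n_ge3 dom; apply: chain_tail_last => //; apply: ltnW.
Qed.
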